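(* Let $\mathfrak g=\mathfrak{osp}(m|2n)\cong\mathfrak{spo}(2n|m)$ and let $\Phi$ be the composition of $\mathfrak g$-module morphisms $$\mathfrak g\wedge\mathfrak g\otimes\mathfrak g\hookrightarrow\mathfrak g\otimes\mathfrak g\otimes\mathfrak g\xrightarrow{\ \mathrm{id}\otimes\Pi_2\ }\mathfrak g\otimes(\mathfrak g\circledcirc_2\mathfrak g),$$ where $\Pi_2(X\otimes Y)=X\circledcirc_2Y$. Then $\dim\mathrm{Hom}_{\mathfrak g}(\mathfrak g,\ker\Phi)\ge1$.
   Context: Conventions: $\mathbb C^{m|2n}$ with parity $[a]=0$ for $a\le m$, else $1$; orthosymplectic metric $g_{ab}$ (invertible, even, $g_{ba}=(-1)^{[a][b]}g_{ab}$), $g^{ab}=g_{ab}$, raising/lowering by $V_a=\sum_bg_{ab}V^b$, $V^c=\sum_ag^{ac}V_a$; standing assumption $m>4$, $n>1$. $\mathfrak g$ = tensors $A^{ab}=-(-1)^{[a][b]}A^{ba}$; $\mathfrak g\otimes\mathfrak g$ = tensors $T^{abcd}$ super-antisymmetric in $(a,b)$ and $(c,d)$; $\mathfrak g\odot\mathfrak g$ (resp. $\mathfrak g\wedge\mathfrak g$) those with $T^{abcd}=\pm(-1)^{([a]+[b])([c]+[d])}T^{cdab}$ (sign $+$, resp. $-$). Let $s$ be the supersymmetrization $s(T)^{abcd}=\frac12(T^{abcd}+(-1)^{([a]+[b])([c]+[d])}T^{cdab})$ and $q(V)^{abcd}=\frac13(V^{abcd}+(-1)^{[a]([b]+[c])}V^{bcad}-(-1)^{[b][c]}V^{acbd})$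 on $\mathfrak g\odot\mathfrak g$; $q$ is a $\mathfrak g$-equivariant idempotent. The second Cartan product is $\mathfrak g\circledcirc_2\mathfrak g=\mathrm{Im}(q)$ (the irreducible module of highest weight $4\delta_1$ for the standard positive system, i.e. the Cartan product in $\mathfrak{spo}(2n|m)\otimes\mathfrak{spo}(2n|m)$), and $X\circledcirc_2Y:=q(s(X\otimes Y))$, the projection along $\ker q\oplus\mathfrak g\wedge\mathfrak g$. *)

From HB Require Import structures.
From mathcomp Require Import all_boot all_order all_algebra.
Set Implicit Arguments. Unset Strict Implicit. Unset Printing Implicit Defensive.
Import Order.TTheory GRing.Theory Num.Theory.
Local Open Scope ring_scope.

(* Indices of C^{m|2n}: 'I_(m + 2n); parity [a] = 0 for a < m (i.e. a <= m in
   1-based numbering), 1 otherwise. *)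
Definition idx (m n : nat) := 'I_(m + 2 * n).
Definition par {m n : nat} (a : idx m n) : nat := (m <= a)%N.

(* k-tensors T^{c_1 ... c_k} (all indices upstairs) = elements of V^{(x)k}. *)
Notation tensor C m n k := {ffun k.-tuple (idx m n) -> (GRing.Field.sort C)^o}.

Section Tensors.
Variables (C : numClosedFieldType) (m n : nat).
Local Notation I := (idx m n).
Local Notation tensor k := (tensor C m n k).

Definition sgn (e : nat) : C := (-1) ^+ e.

Definition tsubst k (c : k.-tuple I) (i : 'I_k) (d : I) : k.-tuple I :=
  [tuple (if j == i then d else tnth c j) | j < k].

(* The natural (super) action of X in gl(m|2n) (matrix X, X e_d = sum_c X_cd e_c)
   on V^{(x)k}, extended graded-linearly:
   (X.T)^{c_1..c_k} = sum_i sum_d (-1)^{([c_i]+[d])([c_1]+..+[c_{i-1}])}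
                        X^{c_i}_d T^{c_1..d..c_k}. *)
Definition act k (X : 'M[C]_(m + 2 * n)) (T : tensor k) : tensor k :=
  [ffun c => \sum_(i < k) \sum_(d : I)
      sgn ((par (tnth c i) + par d) * \sum_(j < k | (j < i)%N) par (tnth c j))
      * X (tnth c i) d * T (tsubst c i d)].

(* orthosymplectic metric: even, g_ba = (-1)^{[a][b]} g_ab, and g^{ab} = g_ab is
   its inverse in the sense sum_a g_ac g_ab = delta_cb *)
Definition ortho_metric (g : 'M[C]_(m + 2 * n)) : Prop :=
  [/\ forall a b : I, par a != par b -> g a b = 0,
      forall a b : I, g b a = sgn (par a * par b) * g a b
    & g^T *m g = 1%:M].

Definition metric_tensor (g : 'M[C]_(m + 2 * n)) : tensor 2 :=
  [ffun c => g (tnth c 0) (tnth c 1)].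

Definition in_osp (g X : 'M[C]_(m + 2 * n)) : Prop :=
  act X (metric_tensor g) = 0.

Definition t2 (a b : I) : 2.-tuple I := [tuple a; b].
Definition t4 (a b c d : I) : 4.-tuple I := [tuple a; b; c; d].
Definition t6 (a b c d e f : I) : 6.-tuple I := [tuple a; b; c; d; e; f].

(* g = super-antisymmetric 2-tensors *)
Definition in_g (A : tensor 2) : Prop :=
  forall a b, A (t2 a b) = - sgn (par a * par b) * A (t2 b a).

Definition in_wedge_g_tensor_g (T : tensor 6) : Prop :=
  [/\ forall a b c d e f, T (t6 a b c d e f) = - sgn (par a * par b) * T (t6 b a c d e f),
      forall a b c d e f, T (t6 a b c d e f) = - sgn (par c * par d) * T (t6 a b d c e f),
      forall a b c d e f, T (t6 a b c d e f) = - sgn (par e * par f) * T (t6 a b c d f e)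
    & forall a b c d e f, T (t6 a b c d e f) =
        - sgn ((par a + par b) * (par c + par d)) * T (t6 c d a b e f)].

Definition s_op (V : I -> I -> I -> I -> C) : I -> I -> I -> I -> C :=
  fun a b c d => 2%:R^-1 * (V a b c d + sgn ((par a + par b) * (par c + par d)) * V c d a b).
Definition q_op (V : I -> I -> I -> I -> C) : I -> I -> I -> I -> C :=
  fun a b c d => 3%:R^-1 * (V a b c d + sgn (par a * (par b + par c)) * V b c a d
                             - sgn (par b * par c) * V a c b d).

(* Pi_2 (X (x) Y) = X circledcirc_2 Y = q (s (X (x) Y)), extended linearly to g (x) g *)
Definition Pi2 (T : tensor 4) : tensor 4 :=
  [ffun c => q_op (s_op (fun a b c d => T (t4 a b c d)))
                  (tnth c 0) (tnth c 1) (tnth c 2) (tnth c 3)].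

(* Phi = (id (x) Pi_2) restricted to g /\ g (x) g; Pi_2 is even, so it acts
   componentwise on the last four indices *)
Definition Phi (T : tensor 6) : tensor 6 :=
  [ffun c => q_op (s_op (fun a b d e => T (t6 (tnth c 0) (tnth c 1) a b d e)))
                  (tnth c 2) (tnth c 3) (tnth c 4) (tnth c 5)].

Definition in_ker_Phi (T : tensor 6) : Prop := in_wedge_g_tensor_g T /\ Phi T = 0.

Definition tensor_of_parity k (p : nat) (T : tensor k) : Prop :=
  forall c, T c != 0 -> odd (\sum_(j < k) par (tnth c j)) = odd p.

Definition is_g_hom_into_ker_Phi (g : 'M[C]_(m + 2 * n))
    (f : {linear tensor 2 -> tensor 6}) : Prop :=
  [/\ forall A, in_g A -> in_ker_Phi (f A),
      forall A p, in_g A -> tensor_of_parity p A -> tensor_of_parity p (f A)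
    & forall X A, in_osp g X -> in_g A -> f (act X A) = act X (f A)].

End Tensors.

From HB Require Import structures.
From mathcomp Require Import all_boot all_order all_algebra ring zify.
From mathcomp Require Import fingroup perm.
Set Implicit Arguments. Unset Strict Implicit. Unset Printing Implicit Defensive.
Import Order.TTheory GRing.Theory Num.Theory.
Local Open Scope ring_scope.

(* We write down an explicit even g-module morphism
     f(A) = Alt (g^{bc} g^{df} A^{ae} + g^{ce} g^{df} A^{ab}),
   where Alt alternates, with Koszul signs, over the slot pairs (a,b), (c,d),
   (e,f) and over the exchange of (a,b) with (c,d), and verify its properties:
   - slot permutations act on super tensors with Koszul signs ([pact]); this is
     a right action of the symmetric group (the Koszul cocycle, [pact_mul]) and
     it commutes with the gl(m|2n)-action ([act_pact]);
   - g (x) g (x) A is osp-equivariant in A because the metric is even and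
     osp-invariant ([act_ggA]); hence f is linear, even and equivariant;
   - f(A) lies in g /\ g (x) g by the relations between the four alternating
     involutions alone ([kerPhi_map_wedge]);
   - Phi (f A) = 0 is a polynomial identity in the entries of g and A, checked
     in each parity sector ([Phi_kerPhi_map]);
   - f (e_1 /\ e_2) != 0, by evaluating one component ([kerPhi_map_nonzero]). *)

Section KoszulSigns.
Variables (C : numClosedFieldType) (m n : nat).
Local Notation I := (idx m n).
Local Notation tensor k := (tensor C m n k).
Local Notation sgn := (sgn C).

Lemma sgn_odd e1 e2 : odd e1 = odd e2 -> sgn e1 = sgn e2.
Proof. by rewrite /sgn -signr_odd => ->; rewrite signr_odd. Qed.

Lemma sgnD e1 e2 : sgn (e1 + e2) = sgn e1 * sgn e2.
Proof. exact: exprD. Qed.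

Lemma sgn_if e : sgn e = if odd e then -1 else 1.
Proof. by rewrite /sgn -signr_odd; case: (odd e); rewrite ?expr1 ?expr0. Qed.

Lemma sum_even k (F : 'I_k -> nat) : (forall j, ~~ odd (F j)) -> ~~ odd (\sum_j F j).
Proof.
move=> evenF; apply: (big_ind (fun x => ~~ odd x)) => // x y.
by rewrite oddD; case: (odd x); case: (odd y).
Qed.

(* A quadratic form over Z/2 whose coefficient matrix K is alternating mod 2
   vanishes; this is how all the sign identities below are checked. *)
Lemma quad_even k (K : 'I_k -> 'I_k -> nat) (w : 'I_k -> nat) :
  (forall i, ~~ odd (K i i)) -> (forall i j, ~~ odd (K i j + K j i)) ->
  ~~ odd (\sum_(i < k) \sum_(j < k) K i j * (w i * w j)).
Proof.
move=> Kdiag Kalt.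
pose F i j := (K i j * (w i * w j))%N.
have trichotomy : forall i j : 'I_k,
    F i j = ((i < j)%N * F i j + (j < i)%N * F i j + (i == j) * F i j)%N.
  move=> i j; case: (ltngtP i j) => [lt_ij|lt_ji|/val_inj ->].
  - rewrite (_ : (i == j) = false) ?mul1n ?mul0n ?addn0 //.
    by apply/negbTE; rewrite neq_ltn lt_ij.
  - rewrite (_ : (i == j) = false) ?mul1n ?mul0n ?add0n ?addn0 //.
    by apply/negbTE; rewrite neq_ltn lt_ji orbT.
  - by rewrite eqxx mul1n.
have lower : (\sum_(i < k) \sum_(j < k) (j < i)%N * F i j =
              \sum_(i < k) \sum_(j < k) (i < j)%N * F j i)%N by rewrite exchange_big.
have diag : (\sum_(i < k) \sum_(j < k) (i == j) * F i j = \sum_(i < k) F i i)%N.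
  apply: eq_bigr => i _; rewrite (bigD1 i) //= eqxx mul1n big1 ?addn0 // => j.
  by rewrite eq_sym => /negbTE ->.
rewrite (eq_bigr (fun i : 'I_k => \sum_(j < k) ((i < j)%N * F i j + (j < i)%N * F i j
                                        + (i == j) * F i j))%N); last first.
  by move=> i _; apply: eq_bigr => j _; rewrite -trichotomy.
rewrite (eq_bigr (fun i : 'I_k => \sum_(j < k) (i < j)%N * F i j + \sum_(j < k) (j < i)%N * F i j
                           + \sum_(j < k) (i == j) * F i j))%N; last first.
  by move=> i _; rewrite !big_split.
rewrite !big_split /= lower diag -big_split /=.
rewrite oddD negb_add; apply/eqP.
have ->: odd (\sum_(i < k) F i i) = false.
  by apply/negbTE/sum_even => i; rewrite /F oddM negb_and Kdiag.
apply/negbTE/sum_even => i; rewrite -big_split; apply: sum_even => j /=.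
rewrite -mulnDr /F [(w j * w i)%N]mulnC -mulnDl.
by rewrite oddM negb_and oddM negb_and Kalt orbT.
Qed.

(* A permutation s of the k slots moves the
   entry in slot s j to slot j; [inversion s i j] records the pairs of slots
   whose order s reverses, and [koszul s c] is the exponent of the Koszul sign
   picked up by the index string c: one factor [c_i][c_j] per reversed pair. *)
Definition ptup k (s : {perm 'I_k}) (c : k.-tuple I) : k.-tuple I :=
  [tuple tnth c (s j) | j < k].

Definition inversion k (s : {perm 'I_k}) (i j : 'I_k) : nat :=
  (i < j)%N && (s j < s i)%N.

Definition koszul k (s : {perm 'I_k}) (c : k.-tuple I) : nat :=
  \sum_(i < k) \sum_(j < k) inversion s i j * (par (tnth c (s i)) * par (tnth c (s j))).

Definition pact k (s : {perm 'I_k}) (T : tensor k) : tensor k :=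
  [ffun c => sgn (koszul s c) * T (ptup s c)].

Lemma tnth_ptup k (s : {perm 'I_k}) (c : k.-tuple I) j : tnth (ptup s c) j = tnth c (s j).
Proof. exact: tnth_mktuple. Qed.

Lemma ptupM k (s t : {perm 'I_k}) (c : k.-tuple I) : ptup s (ptup t c) = ptup (s * t) c.
Proof. by apply: eq_from_tnth => j; rewrite !tnth_ptup permM. Qed.

(* Reversed pairs compose additively mod 2: a pair of positions is reversed by
   a composite iff it is reversed by exactly one factor. *)
Lemma inversion_compose k (i j x y u v : 'I_k) : i != j -> x != y -> u != v ->
  ~~ odd (((i < j) && (v < u)) + (((x < y) && (v < u)) + ((i < j) && (y < x)))
          + (((j < i) && (u < v)) + (((y < x) && (u < v)) + ((j < i) && (x < y)))))%N.
Proof.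
rewrite -!val_eqE.
by case: (ltngtP i j); case: (ltngtP x y); case: (ltngtP u v).
Qed.

Lemma koszul_mul k (s t : {perm 'I_k}) (c : k.-tuple I) :
  odd (koszul (s * t) c) = odd (koszul t c + koszul s (ptup t c)).
Proof.
pose w i := par (tnth c (t (s i))).
have Est : koszul (s * t) c = (\sum_i \sum_j inversion (s * t) i j * (w i * w j))%N.
  by apply: eq_bigr => i _; apply: eq_bigr => j _; rewrite !permM.
have Et : koszul t c = (\sum_i \sum_j inversion t (s i) (s j) * (w i * w j))%N.
  rewrite /koszul (reindex_inj (@perm_inj _ s)); apply: eq_bigr => i _.
  by rewrite (reindex_inj (@perm_inj _ s)).
have Es : koszul s (ptup t c) = (\sum_i \sum_j inversion s i j * (w i * w j))%N.
  by apply: eq_bigr => i _; apply: eq_bigr => j _; rewrite !tnth_ptup.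
suff : ~~ odd (koszul (s * t) c + (koszul t c + koszul s (ptup t c))).
  by rewrite oddD negb_add => /eqP.
rewrite Est Et Es -!big_split /=.
under eq_bigr => i _ do rewrite -!big_split /=.
under eq_bigr => i _ do under eq_bigr => j _ do rewrite -!mulnDl.
apply: (@quad_even _ (fun i j => inversion (s * t) i j + (inversion t (s i) (s j)
                              + inversion s i j)))%N => [i|i j].
  by rewrite /inversion !ltnn.
have [-> | neq_ij] := eqVneq i j; first by rewrite addnn odd_double.
rewrite /inversion !permM; apply: inversion_compose => //.
  by rewrite (inj_eq perm_inj).
by rewrite !(inj_eq perm_inj).
Qed.

Lemma koszul1 k (c : k.-tuple I) : koszul 1 c = 0%N.
Proof.
by apply: big1 => i _; apply: big1 => j _; rewrite /inversion !perm1; case: ltngtP.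
Qed.

Lemma pact_mul k (s t : {perm 'I_k}) (T : tensor k) :
  pact t (pact s T) = pact (s * t) T.
Proof.
apply/ffunP => c; rewrite !ffunE ptupM mulrA -sgnD.
by congr (_ * _); apply: sgn_odd; rewrite koszul_mul.
Qed.

Lemma pact1 k (T : tensor k) : pact 1 T = T.
Proof.
apply/ffunP => c; rewrite ffunE koszul1 /sgn expr0 mul1r; congr (T _).
by apply: eq_from_tnth => j; rewrite tnth_ptup perm1.
Qed.

Lemma pactD k (s : {perm 'I_k}) (T S : tensor k) : pact s (T + S) = pact s T + pact s S.
Proof. by apply/ffunP => c; rewrite !ffunE mulrDr. Qed.

Lemma pactN k (s : {perm 'I_k}) (T : tensor k) : pact s (- T) = - pact s T.
Proof. by apply/ffunP => c; rewrite !ffunE mulrN. Qed.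

Lemma pactZ k (s : {perm 'I_k}) (a : C) (T : tensor k) : pact s (a *: T) = a *: pact s T.
Proof. by apply/ffunP => c; rewrite !ffunE mulrCA. Qed.

Lemma quad_split k (M : 'I_k -> 'I_k -> nat) (y : 'I_k -> nat) i0 :
  M i0 i0 = 0%N ->
  (\sum_i \sum_j M i j * (y i * y j) =
   \sum_(i | i != i0) \sum_(j | j != i0) M i j * (y i * y j)
   + y i0 * \sum_j (M i0 j + M j i0) * y j)%N.
Proof.
move=> M0; rewrite (bigD1 i0) //=.
have rows : (\sum_(i | i != i0) \sum_j M i j * (y i * y j) =
   \sum_(i | i != i0) \sum_(j | j != i0) M i j * (y i * y j)
   + \sum_(i | i != i0) M i i0 * (y i * y i0))%N.
  by rewrite -big_split /=; apply: eq_bigr => i _; rewrite (bigD1 i0) //= addnC.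
have cross : (y i0 * \sum_j (M i0 j + M j i0) * y j =
   \sum_j M i0 j * (y i0 * y j) + \sum_(i | i != i0) M i i0 * (y i * y i0))%N.
  rewrite big_distrr /= (eq_bigr (fun j => M i0 j * (y i0 * y j) + M j i0 * (y j * y i0)))%N.
    by rewrite big_split /= [in X in (_ + X)%N](bigD1 i0) //= M0 mul0n add0n.
  by move=> j _; ring.
by rewrite rows cross addnCA addnA.
Qed.

Lemma tnth_tsubst k (c : k.-tuple I) i (d : I) j :
  tnth (tsubst c i d) j = if j == i then d else tnth c j.
Proof. exact: tnth_mktuple. Qed.

Lemma ptup_tsubst k (s : {perm 'I_k}) (c : k.-tuple I) i (d : I) :
  ptup s (tsubst c (s i) d) = tsubst (ptup s c) i d.
Proof.
apply: eq_from_tnth => j; rewrite tnth_ptup !tnth_tsubst tnth_ptup.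
by rewrite (inj_eq perm_inj).
Qed.

Lemma koszul_tsubst k (s : {perm 'I_k}) (c : k.-tuple I) i (d : I) :
  odd (koszul s (tsubst c (s i) d) + koszul s c) =
  odd ((par (tnth c (s i)) + par d)
       * \sum_j (inversion s i j + inversion s j i) * par (tnth c (s j))).
Proof.
have M0 : inversion s i i = 0%N by rewrite /inversion ltnn.
pose y j := par (tnth c (s j)).
pose y' j := par (tnth (tsubst c (s i) d) (s j)).
have y'E j : y' j = if j == i then par d else y j.
  by rewrite /y' tnth_tsubst (inj_eq perm_inj); case: (j == i).
rewrite /koszul -/y -/y' !(quad_split y M0) !(quad_split y' M0) y'E eqxx.
have -> : (\sum_j (inversion s i j + inversion s j i) * y' j =
           \sum_j (inversion s i j + inversion s j i) * y j)%N.
  by apply: eq_bigr => j _; rewrite y'E; case: eqP => // ->; rewrite M0.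
have -> : (\sum_(a | a != i) \sum_(b | b != i) inversion s a b * (y' a * y' b) =
           \sum_(a | a != i) \sum_(b | b != i) inversion s a b * (y a * y b))%N.
  apply: eq_bigr => a /negbTE ai; apply: eq_bigr => b /negbTE bi.
  by rewrite !y'E ai bi.
rewrite !oddD !oddM oddD -/(y i).
by case: (odd (\sum_(a | _) _)); case: (odd (y i)); case: (odd (par d)); case: (odd (\sum_j _)).
Qed.

Lemma prefix_parity k (s : {perm 'I_k}) (c : k.-tuple I) i :
  odd (\sum_(j < k | (j < s i)%N) par (tnth c j)
       + \sum_(j < k | (j < i)%N) par (tnth (ptup s c) j)) =
  odd (\sum_j (inversion s i j + inversion s j i) * par (tnth c (s j))).
Proof.
pose y j := par (tnth c (s j)).
have -> : (\sum_(j < k | (j < s i)%N) par (tnth c j) = \sum_(j < k) (s j < s i)%N * y j)%N.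
  rewrite big_mkcond (reindex_inj (@perm_inj _ s)) /=.
  by apply: eq_bigr => j _; case: ifP; rewrite ?mul1n.
have -> : (\sum_(j < k | (j < i)%N) par (tnth (ptup s c) j) = \sum_(j < k) (j < i)%N * y j)%N.
  rewrite big_mkcond /=.
  by apply: eq_bigr => j _; rewrite tnth_ptup; case: ifP; rewrite ?mul1n.
set P1 := (\sum_(j < k) (s j < s i)%N * y j)%N; set P2 := (\sum_(j < k) (j < i)%N * y j)%N.
set R := (\sum_(j < k) _ * par _)%N.
suff : ~~ odd (P1 + R + P2).
  by rewrite !oddD; case: (odd P1); case: (odd P2); case: (odd R).
rewrite /P1 /P2 /R -!big_split /=.
apply: sum_even => j; rewrite -!mulnDl oddM negb_and; apply/orP; left.
rewrite /inversion; have [-> | neq_ji] := eqVneq j i; first by rewrite !ltnn.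
have neq_s : s j != s i by rewrite (inj_eq perm_inj).
move: neq_ji neq_s; rewrite -!val_eqE.
by case: (ltngtP i j); case: (ltngtP (s i) (s j)).
Qed.

Lemma act_pact_sign k (s : {perm 'I_k}) (c : k.-tuple I) i (d : I) :
  sgn ((par (tnth c (s i)) + par d) * \sum_(j < k | (j < s i)%N) par (tnth c j))
  * sgn (koszul s (tsubst c (s i) d))
  = sgn (koszul s c)
    * sgn ((par (tnth c (s i)) + par d) * \sum_(j < k | (j < i)%N) par (tnth (ptup s c) j)).
Proof.
rewrite -!sgnD; apply: sgn_odd.
move: (koszul_tsubst s c i d) (prefix_parity s c i).
set a := (par _ + par d)%N; set P1 := (\sum_(j < k | _) _)%N; set P2 := (\sum_(j < k | _) _)%N.
set R := (\sum_j _)%N; set K' := koszul s _; set K := koszul s c.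
rewrite !oddD !oddM.
by case: (odd a); case: (odd P1); case: (odd P2); case: (odd K); case: (odd K'); case: (odd R).
Qed.

Lemma act_pact k (X : 'M[C]_(m + 2 * n)) (s : {perm 'I_k}) (T : tensor k) :
  act X (pact s T) = pact s (act X T).
Proof.
apply/ffunP => c; rewrite !ffunE big_distrr /= (reindex_inj (@perm_inj _ s)) /=.
apply: eq_bigr => i _; rewrite big_distrr /=; apply: eq_bigr => d _.
rewrite !ffunE ptup_tsubst [tnth (ptup s c) i]tnth_ptup.
have := act_pact_sign s c i d.
move: (sgn (_ * \sum_(j < k | (j < s i)%N) _)) (sgn (koszul s (tsubst c (s i) d))).
move: (sgn (koszul s c)) (sgn (_ * \sum_(j < k | (j < i)%N) _)) => u v x y E.
move: (X _ d) (T _) => a b.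
by transitivity (x * y * (a * b)); [ring | rewrite E; ring].
Qed.

Lemma actD k (X : 'M[C]_(m + 2 * n)) (T S : tensor k) : act X (T + S) = act X T + act X S.
Proof.
apply/ffunP => c; rewrite !ffunE -big_split /=; apply: eq_bigr => i _.
by rewrite -big_split /=; apply: eq_bigr => d _; rewrite !ffunE mulrDr.
Qed.

Lemma actN k (X : 'M[C]_(m + 2 * n)) (T : tensor k) : act X (- T) = - act X T.
Proof.
apply/ffunP => c; rewrite !ffunE -sumrN; apply: eq_bigr => i _.
by rewrite -sumrN; apply: eq_bigr => d _; rewrite !ffunE mulrN.
Qed.
End KoszulSigns.

Section SixTensors.
Variables (C : numClosedFieldType) (m n : nat).
Local Notation I := (idx m n).
Local Notation tensor k := (tensor C m n k).
Local Notation sgn := (sgn C).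

Lemma tuple2E (c : 2.-tuple I) : c = t2 (tnth c 0) (tnth c 1).
Proof. by apply: eq_from_tnth => -[[|[|//]] ?]; rewrite [RHS]/tnth /=; congr tnth; exact: val_inj. Qed.

Lemma tuple6E (c : 6.-tuple I) :
  c = t6 (tnth c 0) (tnth c 1) (tnth c 2) (tnth c 3) (tnth c 4) (tnth c 5).
Proof.
apply: eq_from_tnth => -[[|[|[|[|[|[|//]]]]]] ?]; rewrite [RHS]/tnth /=; congr tnth; exact: val_inj.
Qed.

Lemma act2E (X : 'M[C]_(m + 2 * n)) (T : tensor 2) (a b : I) :
  act X T (t2 a b) =
    \sum_x X a x * T (t2 x b) + \sum_x sgn ((par b + par x) * par a) * X b x * T (t2 a x).
Proof.
rewrite ffunE !big_ord_recl big_ord0 addr0.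
congr (_ + _); apply: eq_bigr => x _.
  rewrite big_pred0 // muln0 /sgn expr0 mul1r; congr (_ * T _).
  by apply: eq_from_tnth => -[[|[|//]] ?]; rewrite tnth_mktuple.
rewrite big_mkcond !big_ord_recl big_ord0 /= addn0 addn0; congr (_ * _ * T _).
by apply: eq_from_tnth => -[[|[|//]] ?]; rewrite tnth_mktuple.
Qed.

Lemma act6E (X : 'M[C]_(m + 2 * n)) (T : tensor 6) (a b c d e f : I) :
  act X T (t6 a b c d e f) =
    (\sum_x X a x * T (t6 x b c d e f)
     + \sum_x sgn ((par b + par x) * par a) * X b x * T (t6 a x c d e f))
  + (\sum_x sgn ((par c + par x) * (par a + par b)) * X c x * T (t6 a b x d e f)
     + \sum_x sgn ((par d + par x) * (par a + par b + par c)) * X d x * T (t6 a b c x e f))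
  + (\sum_x sgn ((par e + par x) * (par a + par b + par c + par d)) * X e x * T (t6 a b c d x f)
     + \sum_x sgn ((par f + par x) * (par a + par b + par c + par d + par e))
         * X f x * T (t6 a b c d e x)).
Proof.
rewrite ffunE !big_ord_recl big_ord0 addr0 !addrA.
congr (_ + _ + _ + _ + _ + _); apply: eq_bigr => x _.
all: rewrite big_mkcond !big_ord_recl big_ord0 /=.
all: rewrite ?(mul0r, mulr0, muln0, addn0, add0n) /sgn ?expr0 ?mul1r.
all: congr (_ * _ * T _) || congr (_ * T _).
all: try by apply: eq_from_tnth => -[[|[|[|[|[|[|//]]]]]] ?]; rewrite tnth_mktuple.
all: by rewrite /tnth /= !addnA.
Qed.

Lemma tensorDE k (T S : tensor k) c : (T + S) c = T c + S c.
Proof. exact: ffunE. Qed.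

Lemma tensorBE k (T S : tensor k) c : (T - S) c = T c - S c.
Proof. by rewrite !ffunE. Qed.

Definition triple (P Q R : tensor 2) : tensor 6 :=
  [ffun c => P (t2 (tnth c 0) (tnth c 1)) * Q (t2 (tnth c 2) (tnth c 3))
             * R (t2 (tnth c 4) (tnth c 5))].

Lemma tripleE (P Q R : tensor 2) (a b c d e f : I) :
  triple P Q R (t6 a b c d e f) = P (t2 a b) * Q (t2 c d) * R (t2 e f).
Proof. by rewrite ffunE. Qed.

Lemma even2 (P : tensor 2) (a b : I) :
  tensor_of_parity 0 P -> P (t2 a b) != 0 -> ~~ odd (par a + par b).
Proof. by move=> evP /evP; rewrite !big_ord_recl big_ord0 addn0 => ->. Qed.

Lemma sgn_even e u : ~~ odd u -> sgn (e * u) = 1.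
Proof.
by move=> ev; rewrite /sgn -signr_odd oddM (negbTE ev) andbF.
Qed.

Lemma sgn_shift e u r : ~~ odd u -> sgn (e * (u + r)) = sgn (e * r).
Proof. by move=> ev; apply: sgn_odd; rewrite !oddM oddD (negbTE ev). Qed.

(* Leibniz rule: X acts on P (x) Q (x) R slot-pair by slot-pair; no extra signs
   arise because P and Q are even. *)
Lemma act_triple (X : 'M[C]_(m + 2 * n)) (P Q R : tensor 2) :
  tensor_of_parity 0 P -> tensor_of_parity 0 Q ->
  act X (triple P Q R) = triple (act X P) Q R + triple P (act X Q) R + triple P Q (act X R).
Proof.
move=> evP evQ; apply/ffunP => t; rewrite (tuple6E t).
move: (tnth t 0) (tnth t 1) (tnth t 2) (tnth t 3) (tnth t 4) (tnth t 5) => a b c d e f.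
rewrite act6E !tensorDE !tripleE !act2E; congr (_ + _ + _).
- rewrite mulrDl mulrDl !big_distrl /=.
  by congr (_ + _); apply: eq_bigr => x _; rewrite tripleE !mulrA.
- have [P0 | /(even2 evP) evab] := eqVneq (P (t2 a b)) 0.
    by rewrite P0 !mul0r !big1 ?addr0 // => x _; rewrite tripleE P0 !(mulr0, mul0r).
  rewrite mulrDr mulrDl !big_distrr !big_distrl /=.
  congr (_ + _); apply: eq_bigr => x _; rewrite tripleE.
    by rewrite sgn_even //; ring.
  by rewrite sgn_shift //; ring.
- have [P0 | /(even2 evP) evab] := eqVneq (P (t2 a b)) 0.
    by rewrite P0 !mul0r !big1 ?addr0 // => x _; rewrite tripleE P0 !(mulr0, mul0r).
  have [Q0 | /(even2 evQ) evcd] := eqVneq (Q (t2 c d)) 0.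
    by rewrite Q0 mulr0 mul0r !big1 ?addr0 // => x _; rewrite tripleE Q0 !(mulr0, mul0r).
  rewrite mulrDr !big_distrr /=.
  congr (_ + _); apply: eq_bigr => x _; rewrite tripleE -!(addnA (par a + par b)%N).
    by rewrite sgn_shift // sgn_even //; ring.
  by rewrite !sgn_shift //; ring.
Qed.

Lemma metric_tensorE (g : 'M[C]_(m + 2 * n)) (a b : I) : metric_tensor g (t2 a b) = g a b.
Proof. by rewrite ffunE. Qed.

Lemma metric_even (g : 'M[C]_(m + 2 * n)) :
  (forall a b : I, par a != par b -> g a b = 0) -> tensor_of_parity 0 (metric_tensor g).
Proof.
move=> g_even c; rewrite (tuple2E c) metric_tensorE !big_ord_recl big_ord0 addn0 /=.
apply: contraNeq; rewrite /tnth /= => odd_ab; apply/eqP/g_even.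
by apply: contra odd_ab => /eqP ->; rewrite addnn odd_double.
Qed.

Lemma triple0l (Q R : tensor 2) : triple 0 Q R = 0.
Proof. by apply/ffunP => c; rewrite !ffunE !mul0r. Qed.

Lemma triple0m (P R : tensor 2) : triple P 0 R = 0.
Proof. by apply/ffunP => c; rewrite !ffunE mulr0 mul0r. Qed.

Lemma triple_linear (P Q : tensor 2) (a : C) (R S : tensor 2) :
  triple P Q (a *: R + S) = a *: triple P Q R + triple P Q S.
Proof. by apply/ffunP => c; rewrite !ffunE mulrDr mulrCA. Qed.

Lemma triple_parity p (P Q R : tensor 2) :
  tensor_of_parity 0 P -> tensor_of_parity 0 Q -> tensor_of_parity p R ->
  tensor_of_parity p (triple P Q R).
Proof.
move=> evP evQ parR t; rewrite (tuple6E t).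
move: (tnth t 0) (tnth t 1) (tnth t 2) (tnth t 3) (tnth t 4) (tnth t 5) => a b c d e f.
rewrite tripleE => nz.
have /(even2 evP) evab : P (t2 a b) != 0 by apply: contraNneq nz => ->; rewrite !mul0r.
have /(even2 evQ) evcd : Q (t2 c d) != 0 by apply: contraNneq nz => ->; rewrite mulr0 mul0r.
have /parR : R (t2 e f) != 0 by apply: contraNneq nz => ->; rewrite mulr0.
rewrite !big_ord_recl !big_ord0 /tnth /= !addn0 => <-.
move: evab evcd; rewrite !oddD.
by case: (odd (par a)); case: (odd (par b)); case: (odd (par c)); case: (odd (par d));
  case: (odd (par e)); case: (odd (par f)).
Qed.

Definition ggA (g : 'M[C]_(m + 2 * n)) (A : tensor 2) : tensor 6 :=
  triple (metric_tensor g) (metric_tensor g) A.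

Lemma act_ggA (g X : 'M[C]_(m + 2 * n)) (A : tensor 2) :
  (forall a b : I, par a != par b -> g a b = 0) -> in_osp g X ->
  act X (ggA g A) = ggA g (act X A).
Proof.
move=> g_even X_osp; have g_ev := metric_even g_even.
by rewrite /ggA act_triple // X_osp triple0l triple0m !add0r.
Qed.
End SixTensors.

Lemma perm_of_list_inj k (l : seq nat) :
  [&& size l == k.+1, all (fun x => x < k.+1)%N l & uniq l] ->
  injective (fun i : 'I_k.+1 => inord (nth 0 l i) : 'I_k.+1).
Proof.
case/and3P => /eqP size_l /allP lt_l uniq_l i j /(congr1 (@nat_of_ord _)).
rewrite !inordK ?lt_l ?mem_nth ?size_l // => /eqP.
by rewrite nth_uniq ?size_l // => /eqP /ord_inj.
Qed.

Definition perm6 (l : seq nat) ok : {perm 'I_6} := perm (@perm_of_list_inj 5 l ok).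
Arguments perm6 : clear implicits.

Lemma perm6E l ok (i : 'I_6) : nat_of_ord (perm6 l ok i) = nth 0 l i.
Proof.
rewrite permE inordK //; case/and3P: ok => /eqP size_l /allP lt_l _.
by rewrite lt_l ?mem_nth ?size_l.
Qed.

(* The slot permutations of 6-tensors T^{abcdef} used below: the three
   transpositions within a pair, the exchange of the pairs (a,b) and (c,d), and
   two permutations moving g^{ab} g^{cd} A^{ef} to g^{bc} g^{df} A^{ae} and to
   g^{ce} g^{df} A^{ab}. *)
Definition swap_ab : {perm 'I_6} := perm6 [:: 1; 0; 2; 3; 4; 5] isT.
Definition swap_cd : {perm 'I_6} := perm6 [:: 0; 1; 3; 2; 4; 5] isT.
Definition swap_ef : {perm 'I_6} := perm6 [:: 0; 1; 2; 3; 5; 4] isT.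
Definition swap_pairs : {perm 'I_6} := perm6 [:: 2; 3; 0; 1; 4; 5] isT.
Definition seed_perm1 : {perm 'I_6} := perm6 [:: 1; 2; 3; 5; 0; 4] isT.
Definition seed_perm2 : {perm 'I_6} := perm6 [:: 2; 4; 3; 5; 0; 1] isT.

Ltac perm6_eq :=
  apply/permP => -[[|[|[|[|[|[|//]]]]]] ?]; apply: ord_inj;
  rewrite !permM ?perm1 /swap_ab /swap_cd /swap_ef /swap_pairs !perm6E.

Lemma swap_ab_invol : (swap_ab * swap_ab = 1)%g. Proof. by perm6_eq. Qed.
Lemma swap_cd_invol : (swap_cd * swap_cd = 1)%g. Proof. by perm6_eq. Qed.
Lemma swap_ef_invol : (swap_ef * swap_ef = 1)%g. Proof. by perm6_eq. Qed.
Lemma swap_pairs_invol : (swap_pairs * swap_pairs = 1)%g. Proof. by perm6_eq. Qed.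
Lemma swap_cd_ab : (swap_cd * swap_ab = swap_ab * swap_cd)%g. Proof. by perm6_eq. Qed.
Lemma swap_ab_ef : (swap_ab * swap_ef = swap_ef * swap_ab)%g. Proof. by perm6_eq. Qed.
Lemma swap_cd_ef : (swap_cd * swap_ef = swap_ef * swap_cd)%g. Proof. by perm6_eq. Qed.
Lemma swap_pairs_ef : (swap_pairs * swap_ef = swap_ef * swap_pairs)%g. Proof. by perm6_eq. Qed.
Lemma swap_pairs_ab : (swap_pairs * swap_ab = swap_cd * swap_pairs)%g. Proof. by perm6_eq. Qed.
Lemma swap_pairs_cd : (swap_pairs * swap_cd = swap_ab * swap_pairs)%g. Proof. by perm6_eq. Qed.

Section SlotPermutations.
Variables (C : numClosedFieldType) (m n : nat).
Local Notation I := (idx m n).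
Local Notation tensor k := (tensor C m n k).
Local Notation sgn := (sgn C).

Ltac pact6_eval s :=
  rewrite ffunE /s; congr (_ * _); f_equal;
  [ rewrite /koszul !big_ord_recl !big_ord0 /inversion /tnth !perm6E /=; ring
  | apply: eq_from_tnth => -[[|[|[|[|[|[|//]]]]]] ?]; by rewrite !tnth_mktuple /tnth !perm6E ].

Lemma pact_swap_ab (T : tensor 6) (a b c d e f : I) :
  pact swap_ab T (t6 a b c d e f) = sgn (par a * par b) * T (t6 b a c d e f).
Proof. pact6_eval swap_ab. Qed.

Lemma pact_swap_cd (T : tensor 6) (a b c d e f : I) :
  pact swap_cd T (t6 a b c d e f) = sgn (par c * par d) * T (t6 a b d c e f).
Proof. pact6_eval swap_cd. Qed.

Lemma pact_swap_ef (T : tensor 6) (a b c d e f : I) :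
  pact swap_ef T (t6 a b c d e f) = sgn (par e * par f) * T (t6 a b c d f e).
Proof. pact6_eval swap_ef. Qed.

Lemma pact_swap_pairs (T : tensor 6) (a b c d e f : I) :
  pact swap_pairs T (t6 a b c d e f) =
  sgn ((par a + par b) * (par c + par d)) * T (t6 c d a b e f).
Proof. pact6_eval swap_pairs. Qed.

Lemma pact_seed1 (T : tensor 6) (a b c d e f : I) :
  pact seed_perm1 T (t6 a b c d e f) =
  sgn (par a * (par b + par c + par d + par f) + par e * par f) * T (t6 b c d f a e).
Proof. pact6_eval seed_perm1. Qed.

Lemma pact_seed2 (T : tensor 6) (a b c d e f : I) :
  pact seed_perm2 T (t6 a b c d e f) =
  sgn ((par a + par b) * (par c + par d + par e + par f) + par d * par e) * T (t6 c e d f a b).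
Proof. pact6_eval seed_perm2. Qed.
End SlotPermutations.

Section KerPhiMap.
Variables (C : numClosedFieldType) (m n : nat).
Local Notation I := (idx m n).
Local Notation tensor k := (tensor C m n k).

Definition alt k (s : {perm 'I_k}) (T : tensor k) : tensor k := T - pact s T.

Definition anti k (s : {perm 'I_k}) (T : tensor k) : Prop := pact s T = - T.

Lemma anti_alt_self k (s : {perm 'I_k}) (T : tensor k) :
  (s * s = 1)%g -> anti s (alt s T).
Proof. by move=> ss1; rewrite /anti /alt pactD pactN pact_mul ss1 pact1 opprB addrC. Qed.

Lemma anti_alt k (s t u : {perm 'I_k}) (T : tensor k) :
  (s * t = u * s)%g -> anti t T -> anti u T -> anti t (alt s T).
Proof.
rewrite /anti => conj antiT antiU; rewrite /alt pactD pactN pact_mul conj -pact_mul.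
by rewrite antiT antiU pactN opprK opprB addrC.
Qed.

Lemma alt_linear k (s : {perm 'I_k}) (a : C) (T S : tensor k) :
  alt s (a *: T + S) = a *: alt s T + alt s S.
Proof. by rewrite /alt pactD pactZ scalerBr addrACA opprD. Qed.

Lemma act_alt k (X : 'M[C]_(m + 2 * n)) (s : {perm 'I_k}) (T : tensor k) :
  act X (alt s T) = alt s (act X T).
Proof. by rewrite /alt actD actN act_pact. Qed.

Lemma pact_parity k p (s : {perm 'I_k}) (T : tensor k) :
  tensor_of_parity p T -> tensor_of_parity p (pact s T).
Proof.
move=> parT c; rewrite ffunE mulf_eq0 negb_or => /andP[_ /parT <-].
congr odd; rewrite (reindex_inj (@perm_inj _ s)) /=.
by apply: eq_bigr => j _; rewrite tnth_ptup.
Qed.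

Lemma alt_parity k p (s : {perm 'I_k}) (T : tensor k) :
  tensor_of_parity p T -> tensor_of_parity p (alt s T).
Proof.
move=> parT c; rewrite tensorBE => nz.
have [T0 | /parT //] := eqVneq (T c) 0.
by move: nz; rewrite T0 sub0r oppr_eq0; apply: (pact_parity (s := s) parT).
Qed.

Lemma antiE k (s : {perm 'I_k}) (T : tensor k) c : anti s T -> T c = - pact s T c.
Proof. by move=> antiT; rewrite antiT ffunE opprK. Qed.

Definition seed (g : 'M[C]_(m + 2 * n)) (A : tensor 2) : tensor 6 :=
  pact seed_perm1 (ggA g A) + pact seed_perm2 (ggA g A).

Definition kerPhi_map (g : 'M[C]_(m + 2 * n)) (A : tensor 2) : tensor 6 :=
  alt swap_pairs (alt swap_ab (alt swap_cd (alt swap_ef (seed g A)))).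

Lemma kerPhi_map_linear (g : 'M[C]_(m + 2 * n)) : linear (kerPhi_map g).
Proof.
move=> a A B; rewrite /kerPhi_map /seed /ggA triple_linear !pactD !pactZ.
by rewrite addrACA -scalerDr !alt_linear.
Qed.

Lemma act_kerPhi_map (g X : 'M[C]_(m + 2 * n)) (A : tensor 2) :
  (forall a b : I, par a != par b -> g a b = 0) -> in_osp g X ->
  act X (kerPhi_map g A) = kerPhi_map g (act X A).
Proof. by move=> g_even X_osp; rewrite !act_alt actD !act_pact act_ggA. Qed.

Lemma kerPhi_map_parity p (g : 'M[C]_(m + 2 * n)) (A : tensor 2) :
  (forall a b : I, par a != par b -> g a b = 0) ->
  tensor_of_parity p A -> tensor_of_parity p (kerPhi_map g A).
Proof.
move=> g_even parA; have g_ev := metric_even g_even.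
have parY : tensor_of_parity p (ggA g A) by apply: triple_parity.
do 4! apply: alt_parity.
move=> c; rewrite tensorDE => nz.
have [Y0 | nz1] := eqVneq (pact seed_perm1 (ggA g A) c) 0.
  by move: nz; rewrite Y0 add0r; apply: (pact_parity (s := seed_perm2) parY).
exact: (pact_parity (s := seed_perm1) parY).
Qed.

(* The four (anti)symmetries of g /\ g (x) g follow from the relations between
   the alternating involutions; no property of g or A is needed. *)
Lemma kerPhi_map_wedge (g : 'M[C]_(m + 2 * n)) (A : tensor 2) :
  in_wedge_g_tensor_g (kerPhi_map g A).
Proof.
set Y := seed g A.
have ef0 : anti swap_ef (alt swap_ef Y) := anti_alt_self _ swap_ef_invol.
have ef1 := anti_alt swap_cd_ef ef0 ef0.
have cd1 : anti swap_cd (alt swap_cd (alt swap_ef Y)) := anti_alt_self _ swap_cd_invol.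
have ef2 := anti_alt swap_ab_ef ef1 ef1.
have cd2 := anti_alt (esym swap_cd_ab) cd1 cd1.
have ab2 : anti swap_ab (alt swap_ab (alt swap_cd (alt swap_ef Y))).
  exact: anti_alt_self swap_ab_invol.
have ef3 := anti_alt swap_pairs_ef ef2 ef2.
have cd3 := anti_alt swap_pairs_cd cd2 ab2.
have ab3 := anti_alt swap_pairs_ab ab2 cd2.
have pairs3 : anti swap_pairs (kerPhi_map g A) := anti_alt_self _ swap_pairs_invol.
split=> a b c d e f.
- by rewrite (antiE _ ab3) pact_swap_ab mulNr.
- by rewrite (antiE _ cd3) pact_swap_cd mulNr.
- by rewrite (antiE _ ef3) pact_swap_ef mulNr.
- by rewrite (antiE _ pairs3) pact_swap_pairs mulNr.
Qed.
End KerPhiMap.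

Section KernelIdentity.
Variables (C : numClosedFieldType) (m n : nat).
Local Notation I := (idx m n).
Local Notation tensor k := (tensor C m n k).
Local Notation sgn := (sgn C).

Lemma q_s_opE (V : I -> I -> I -> I -> C) (a b c d : I) :
  q_op (s_op V) a b c d = 3%:R^-1 * 2%:R^-1 *
    (V a b c d + sgn ((par a + par b) * (par c + par d)) * V c d a b
     + sgn (par a * (par b + par c))
       * (V b c a d + sgn ((par b + par c) * (par a + par d)) * V a d b c)
     - sgn (par b * par c)
       * (V a c b d + sgn ((par a + par c) * (par b + par d)) * V b d a c)).
Proof. by rewrite /q_op /s_op; ring. Qed.

(* Brings every entry g x y and A (t2 x y) to the orientation x before y in
   the order a, b, c, d, e, f, using the (anti)symmetry of g and A. *)
Ltac orient_entries hA hg a b c d e f :=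
  rewrite ?(hA b a) ?(hA c a) ?(hA d a) ?(hA e a) ?(hA f a) ?(hA c b) ?(hA d b)
          ?(hA e b) ?(hA f b) ?(hA d c) ?(hA e c) ?(hA f c) ?(hA e d) ?(hA f d) ?(hA f e)
          ?(hg a b) ?(hg a c) ?(hg a d) ?(hg a e) ?(hg a f) ?(hg b c) ?(hg b d)
          ?(hg b e) ?(hg b f) ?(hg c d) ?(hg c e) ?(hg c f) ?(hg d e) ?(hg d f) ?(hg e f).

(* Makes the evenness of g visible to [ring]: g x y carries the factor [x]==[y]. *)
Ltac mask_metric g gm a b c d e f :=
  try rewrite [g a b]gm; try rewrite [g a c]gm; try rewrite [g a d]gm;
  try rewrite [g a e]gm; try rewrite [g a f]gm; try rewrite [g b c]gm;
  try rewrite [g b d]gm; try rewrite [g b e]gm; try rewrite [g b f]gm;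
  try rewrite [g c d]gm; try rewrite [g c e]gm; try rewrite [g c f]gm;
  try rewrite [g d e]gm; try rewrite [g d f]gm; try rewrite [g e f]gm.

Lemma Phi_kerPhi_map (g : 'M[C]_(m + 2 * n)) (A : tensor 2) :
  (forall a b : I, par a != par b -> g a b = 0) ->
  (forall a b : I, g b a = sgn (par a * par b) * g a b) ->
  in_g A ->
  Phi (kerPhi_map g A) = 0.
Proof.
move=> g_even g_sym A_anti.
have g_mask : forall x y : I, g x y = (if par x == par y then 1 else 0) * g x y.
  move=> x y; have [_ | /g_even ->] := eqVneq (par x) (par y); first by rewrite mul1r.
  by rewrite mulr0.
have g_sym_if : forall x y : I, g y x = (if odd (par x * par y) then -1 else 1) * g x y.
  by move=> x y; rewrite -sgn_if.
have A_anti_if : forall x y : I,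
    A (t2 x y) = - (if odd (par x * par y) then -1 else 1) * A (t2 y x).
  by move=> x y; rewrite -sgn_if.
evar (F : I -> I -> I -> I -> I -> I -> C).
have FE : forall a b c d e f, kerPhi_map g A (t6 a b c d e f) = F a b c d e f.
  move=> a b c d e f; rewrite /kerPhi_map /alt /seed.
  rewrite !(tensorBE, tensorDE, pact_swap_pairs, pact_swap_ab, pact_swap_cd,
            pact_swap_ef, pact_seed1, pact_seed2).
  by rewrite /ggA !tripleE !metric_tensorE !sgn_if /F.
apply/ffunP => t; rewrite (tuple6E t).
move: (tnth t 0) (tnth t 1) (tnth t 2) (tnth t 3) (tnth t 4) (tnth t 5) => a b c d e f.
rewrite !ffunE /tnth /=.
rewrite q_s_opE; apply/eqP; rewrite mulf_eq0 mulf_eq0 !invr_eq0 !pnatr_eq0 /=; apply/eqP.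
rewrite !sgn_if !FE /F; clear FE F.
(* A polynomial identity in the independent entries g x y, A (t2 x y) (x before
   y), to be checked for each of the 2^6 parity patterns of a, ..., f. *)
orient_entries A_anti_if g_sym_if a b c d e f.
mask_metric g g_mask a b c d e f.
rewrite /par /addn /muln.
move: (m <= a)%N (m <= b)%N (m <= c)%N (m <= d)%N (m <= e)%N (m <= f)%N.
case; case; case; case; case; case => /=.
all: ring.
Qed.
End KernelIdentity.

Section Nonvanishing.
Variables (C : numClosedFieldType) (m n : nat).
Local Notation I := (idx m n).
Local Notation tensor k := (tensor C m n k).

Lemma metric_column (g : 'M[C]_(m + 2 * n)) (e : I) : g^T *m g = 1%:M -> exists x, g x e != 0.
Proof.
move=> g_orth; have [x gx | g0] := pickP (fun x => g x e != 0); first by exists x.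
have := congr1 (fun M : 'M[C]_(m + 2 * n) => M e e) g_orth.
rewrite !mxE eqxx big1 => [/esym/eqP|y _]; first by rewrite oner_eq0.
by rewrite mxE; move/negbFE/eqP: (g0 y) => ->; rewrite mulr0.
Qed.

(* kerPhi_map is nonzero: on A = e_1 /\ e_2 (two even basis vectors) its
   component at (e_1, e_2, x, x, e, e), e odd and g^{xe} != 0, is -8 (g^{xe})^2. *)
Lemma kerPhi_map_nonzero (g : 'M[C]_(m + 2 * n)) :
  (1 < m)%N -> (0 < n)%N -> ortho_metric g ->
  exists A, in_g A /\ kerPhi_map g A != 0.
Proof.
move=> m_gt1 n_gt0 [g_even g_sym g_orth].
have lt0 : (0 < m + 2 * n)%N by lia.
have lt1 : (1 < m + 2 * n)%N by lia.
have ltm : (m < m + 2 * n)%N by lia.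
pose i0 : I := Ordinal lt0; pose j0 : I := Ordinal lt1; pose e0 : I := Ordinal ltm.
have par_i0 : par i0 = 0%N by rewrite /par /=; case: leqP => //; lia.
have par_j0 : par j0 = 0%N by rewrite /par /=; case: leqP => //; lia.
have par_e0 : par e0 = 1%N by rewrite /par /= leqnn.
have [x gx] := metric_column e0 g_orth.
have par_x : par x = 1%N.
  by apply/eqP; apply: contraNT gx => neq; apply/eqP/g_even; rewrite par_e0.
have neq_par y z : par y != par z -> (y == z) = false.
  by apply: contraNF => /eqP ->.
pose A0 : tensor 2 := [ffun t => if (tnth t 0 == i0) && (tnth t 1 == j0) then 1
                                  else if (tnth t 0 == j0) && (tnth t 1 == i0) then -1 else 0].
have A0E y z : A0 (t2 y z) = if (y == i0) && (z == j0) then 1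
                             else if (y == j0) && (z == i0) then -1 else 0.
  by rewrite ffunE.
have ij : (i0 == j0) = false by [].
have A0_anti y z : A0 (t2 z y) = - A0 (t2 y z).
  rewrite !A0E; have [-> | ny] := eqVneq y i0.
    by rewrite ij andbF andbT; case: (z == j0); rewrite ?opprK ?oppr0.
  have [_ | ny'] := eqVneq y j0; last by rewrite !andbF oppr0.
  by rewrite andbT andbF /=; case: (z == i0); rewrite ?opprK ?oppr0.
have A0_even y z : A0 (t2 y z) != 0 -> (par y * par z = 0)%N.
  rewrite A0E; have [-> | _] := eqVneq y i0; first by rewrite par_i0.
  by have [-> | _] := eqVneq y j0; rewrite ?par_j0 //= eqxx.
exists A0; split.
  move=> a b; rewrite (A0_anti a b) mulrN mulNr opprK.
  have [-> | /A0_even ->] := eqVneq (A0 (t2 a b)) 0; first by rewrite mulr0.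
  by rewrite /sgn expr0 mul1r.
apply/eqP => /(congr1 (fun T : tensor 6 => T (t6 i0 j0 x x e0 e0))).
rewrite /kerPhi_map /alt /seed.
rewrite !(tensorBE, tensorDE, pact_swap_pairs, pact_swap_ab, pact_swap_cd,
          pact_swap_ef, pact_seed1, pact_seed2).
have xi : (x == i0) = false by apply: neq_par; rewrite par_x par_i0.
have xj : (x == j0) = false by apply: neq_par; rewrite par_x par_j0.
have ei : (e0 == i0) = false by apply: neq_par; rewrite par_e0 par_i0.
have ej : (e0 == j0) = false by apply: neq_par; rewrite par_e0 par_j0.
rewrite /ggA !tripleE !metric_tensorE !A0E !eqxx ij (eq_sym j0) ij xi xj ei ej /=.
rewrite par_i0 par_j0 par_x par_e0 ffunE => value0.
have : -8%:R * (g x e0 * g x e0) = 0 :> C by rewrite -value0 /sgn; ring.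
by apply/eqP; rewrite mulf_eq0 negb_or mulf_neq0 // andbT oppr_eq0 pnatr_eq0.
Qed.
End Nonvanishing.

Theorem lemma6p1 (C : numClosedFieldType) (m n : nat) (hm : (4 < m)%N) (hn : (1 < n)%N)
    (g : 'M[C]_(m + 2 * n)) (hg : ortho_metric g) :
  exists f : {linear tensor C m n 2 -> tensor C m n 6},
    is_g_hom_into_ker_Phi g f /\ exists A, in_g A /\ f A != 0.
Proof.
have [g_even g_sym _] := hg.
pose f : {linear tensor C m n 2 -> tensor C m n 6} :=
  HB.pack (kerPhi_map g) (GRing.isLinear.Build _ _ _ _ (kerPhi_map g) (kerPhi_map_linear g)).
exists f; split; last by apply: (kerPhi_map_nonzero _ _ hg); lia.
split=> [A A_g | A p _ parA | X A X_osp _].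
- by split; [exact: kerPhi_map_wedge | exact: Phi_kerPhi_map].
- exact: kerPhi_map_parity.
- by rewrite /= act_kerPhi_map.
Qed.
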